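(* Let $X$ be a real Banach space and $X_1=X\setminus B_X$. The following statements are equivalent. (1) $X$ is UR. (2) $\sup_{x,x'\in X_1}\left|r(P_{S_X}(x,\frac1n),P_{S_X}(x',\frac1n))-\left\|\frac{x}{\|x\|}-\frac{x'}{\|x'\|}\right\|\right|\to0$. (3) $\sup_{x\in X_1}\mathrm{diam}(P_{S_X}(x,\frac1n))\to0$. (4) $P_{S_X}(x)=\{\frac{x}{\|x\|}\}$ for every $x\in X_1$ and $\sup_{x\in X_1}H(P_{S_X}(x,\frac1n),P_{S_X}(x))\to0$. (5) $S_X$ is uniformly strongly Chebyshev on $X_1$.
   Context: $B_X,S_X$ are the closed unit ball and unit sphere of $X$. For non-empty closed $A\subseteq X$, $x\in X$, $\delta\ge0$: $P_A(x,\delta)=\{y\in A:\|x-y\|\le\inf_{z\in A}\|x-z\|+\delta\}$, $P_A(x)=P_A(x,0)$. $A$ is uniformly strongly Chebyshev on $D$ if $P_A(x)$ is a singleton for every $x\in D$ and for every $\epsilon>0$ there is $\delta>0$ such that $P_A(x,\delta)\subseteq P_A(x)+\epsilon B_X$ for all $x\in D$. For non-empty bounded $A,B$: $r(A,B)=\sup\{\|a-b\|:a\in A,b\in B\}$, $H(A,B)=\inf\{r>0:A\subseteq B+rB_X,B\subseteq A+rB_X\}$. $X$ is UR if $\|x_n-y_n\|\to0$ whenever $(x_n),(y_n)\subseteq S_X$ with $\|\frac{x_n+y_n}{2}\|\to1$. *)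

From HB Require Import structures.
From mathcomp Require Import all_boot all_order all_algebra.
From mathcomp Require Import all_classical all_reals all_analysis.
Set Implicit Arguments. Unset Strict Implicit. Unset Printing Implicit Defensive.
Import Order.TTheory GRing.Theory Num.Theory.
Import numFieldNormedType.Exports.
Local Open Scope classical_set_scope.
Local Open Scope ring_scope.

Section Defs.
Context {R : realType} {X : normedModType R}.

Definition unit_ball : set X := [set x | `|x| <= 1].
Definition unit_sphere : set X := [set x | `|x| = 1].

Definition dist_set (A : set X) (x : X) : R := inf [set `|x - z| | z in A].

Definition Papprox (A : set X) (x : X) (delta : R) : set X :=
  [set y | A y /\ `|x - y| <= dist_set A x + delta].

Definition Pmetric (A : set X) (x : X) : set X := Papprox A x 0.

Definition enlarge (A : set X) (r : R) : set X :=
  [set a + r *: b | a in A & b in unit_ball].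

Definition unif_strongly_chebyshev (A D : set X) : Prop :=
  (forall x, D x -> exists a, Pmetric A x = [set a]) /\
  (forall eps : R, 0 < eps -> exists2 delta : R, 0 < delta &
     forall x, D x -> Papprox A x delta `<=` enlarge (Pmetric A x) eps).

Definition rsup (A B : set X) : R := sup [set `|a - b| | a in A & b in B].

Definition diam (A : set X) : R := sup [set `|a - b| | a in A & b in A].

Definition hausdorff (A B : set X) : R :=
  inf [set r : R | 0 < r /\ A `<=` enlarge B r /\ B `<=` enlarge A r].

Definition UR : Prop :=
  forall xn yn : nat -> X,
    (forall n, `|xn n| = 1) -> (forall n, `|yn n| = 1) ->
    (fun n => `|2^-1 *: (xn n + yn n)|) @ \oo --> (1 : R) ->
    (fun n => `|xn n - yn n|) @ \oo --> (0 : R).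

Definition X1 : set X := ~` unit_ball.

End Defs.

From HB Require Import structures.
From mathcomp Require Import all_boot all_order all_algebra.
From mathcomp Require Import all_classical all_reals all_analysis.
From mathcomp Require Import lra.
Import Order.TTheory GRing.Theory Num.Theory.
Import numFieldNormedType.Exports.
Local Open Scope classical_set_scope.
Local Open Scope ring_scope.

(* For x in X_1, a point a of S_X is a d-approximate nearest point to x iff
   |x - a| <= |x| - 1 + d; the triangle inequality through a then gives
   |x/|x| + a| >= |x + x/|x|| - |x - a| >= 2 - d.  Conversely, unit vectors u, y
   with |u + y| >= 2 - d are both d-approximate nearest points to u + y.  Hence
   X is UR iff P_S(x, d) shrinks to x/|x| as d -> 0, uniformly on X_1, and each
   of (2)-(5) is a reformulation of this uniform shrinking. *)

Section SupInf.
Variable R : realType.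
Implicit Types (E : set R) (M c : R).

Lemma sup_le_ub E c : 0 <= c -> ubound E c -> sup E <= c.
Proof.
have [->|/set0P En] := eqVneq E set0; first by rewrite sup0.
by move=> _; apply: ge_sup.
Qed.

Lemma sup_nonneg_le E M : 0 <= M -> (forall z, E z -> 0 <= z <= M) -> 0 <= sup E <= M.
Proof.
move=> M0 EM; rewrite sup_le_ub ?andbT //; last by move=> z /EM /andP[].
have [->|/set0P[z Ez]] := eqVneq E set0; first by rewrite sup0.
have /andP[z0 _] := EM z Ez; apply: le_trans z0 (sup_upper_bound _ Ez).
by split; [exists z | exists M => y /EM /andP[]].
Qed.

(* [M] matters: the [sup] of a set that is not bounded above is [0]. *)
Lemma sup_cvg0P (E : nat -> set R) M : 0 <= M ->
  (forall n z, E n z -> 0 <= z <= M) ->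
  (fun n => sup (E n)) @ \oo --> 0 <->
  (forall e, 0 < e -> exists N, forall n, (N <= n)%N -> forall z, E n z -> z < e).
Proof.
move=> M0 EM; split.
- move=> /cvgrPdist_lt cvgE e e0; have [N _ HN] := cvgE e e0.
  exists N => n /HN /=; rewrite sub0r normrN => supE_lt z Ez.
  apply: le_lt_trans (le_lt_trans (ler_norm _) supE_lt).
  apply: (sup_upper_bound _ Ez); split; first by exists z.
  by exists M => y /EM /andP[].
- move=> smallE; apply/cvgr0Pnorm_le => e e0.
  have [N HN] := smallE e e0; exists N => // n /= /HN Hn.
  have /andP[supE0 _] := sup_nonneg_le _ _ M0 (EM n); rewrite ger0_norm //.
  by apply: sup_le_ub (ltW e0) _ => z /Hn /ltW.
Qed.

End SupInf.

Section UnitSphere.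
Variables (R : realType) (X : normedModType R).
Local Notation S := (@unit_sphere R X).
Local Notation dir x := (`|x|^-1 *: x).
Implicit Types (x a b c u y : X) (A B : set X).

Lemma X1E x : X1 x <-> 1 < `|x|.
Proof. by rewrite /X1 /unit_ball /= ltNge; split=> /negP. Qed.

Lemma X1_neq0 {x} : X1 x -> x != 0.
Proof. by move=> /X1E x1; rewrite -normr_eq0 gt_eqF // (lt_trans ltr01). Qed.

Lemma dir_sphere {x} : X1 x -> S (dir x).
Proof. by move=> /X1_neq0; apply: normfZV. Qed.

Lemma sphere_dist_le2 {a b} : S a -> S b -> `|a - b| <= 2.
Proof. by move=> a1 b1; apply: le_trans (ler_normB a b) _; rewrite a1 b1. Qed.

Lemma dist_dir x : 1 <= `|x| -> `|x - dir x| = `|x| - 1.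
Proof.
move=> x1; have x0 : `|x| != 0 by rewrite gt_eqF // (lt_le_trans ltr01).
rewrite -{1}(scale1r x) -scalerBl normrZ ger0_norm.
  by rewrite mulrBl mul1r mulVf.
by rewrite subr_ge0 invf_le1 // (lt_le_trans ltr01).
Qed.

Lemma dist_set_sphere x : X1 x -> dist_set S x = `|x| - 1.
Proof.
move=> Xx; have x1 := (X1E x).1 Xx; have Sdir := dir_sphere Xx.
apply/eqP; rewrite eq_le; apply/andP; split.
  apply: ge_inf; first by exists 0 => _ [z _ <-].
  by exists (dir x) => //; rewrite dist_dir // ltW.
apply: lb_le_inf; first by exists `|x - dir x|, (dir x).
move=> _ [z Sz <-]; rewrite lerBlDr.
by have := ler_normD (x - z) z; rewrite subrK Sz.
Qed.

Lemma Papprox_sphereE {x d a} : X1 x ->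
  Papprox S x d a <-> `|a| = 1 /\ `|x - a| <= `|x| - 1 + d.
Proof. by move=> Xx; rewrite /Papprox /= dist_set_sphere. Qed.

Lemma Papprox_sub_sphere x d : Papprox S x d `<=` S.
Proof. by move=> a []. Qed.

Lemma Papprox_le {x d d'} : d <= d' -> Papprox S x d `<=` Papprox S x d'.
Proof. by move=> dd' a [Sa xa]; split=> //; apply: le_trans xa _; rewrite lerD2l. Qed.

Lemma dir_Papprox {x d} : X1 x -> 0 <= d -> Papprox S x d (dir x).
Proof.
move=> Xx d0; apply/Papprox_sphereE => //; split; first exact: dir_sphere.
by rewrite dist_dir ?lerDl // ltW // -X1E.
Qed.

Lemma Papprox_norm_dirD x d a : X1 x -> Papprox S x d a -> 2 - d <= `|dir x + a|.
Proof.
move=> Xx /(Papprox_sphereE Xx) [a1 xa].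
have x0 : `|x| != 0 by rewrite normr_eq0 X1_neq0.
have normxD : `|x + dir x| = `|x| + 1.
  rewrite -{1}(scale1r x) -scalerDl normrZ ger0_norm ?addr_ge0 ?invr_ge0 //.
  by rewrite mulrDl mul1r mulVf.
have := ler_normD (x - a) (dir x + a).
rewrite addrCA subrK addrC normxD.
move: xa; set p := `|x - a|; set q := `|dir x + a|; lra.
Qed.

Lemma Papprox_sum_sphere {u y} d : `|u| = 1 -> `|y| = 1 -> 1 < `|u + y| ->
  2 - d <= `|u + y| -> Papprox S (u + y) d u /\ Papprox S (u + y) d y.
Proof.
move=> u1 y1 uy1 uy2; have Xuy : X1 (u + y) by apply/X1E.
split; apply/Papprox_sphereE => //; split => //.
- by rewrite addrC addKr y1; lra.
- by rewrite addrK u1; lra.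
Qed.

Lemma enlarge1E c r : 0 < r -> enlarge [set c] r = [set z | `|c - z| <= r].
Proof.
move=> r0; apply/seteqP; split=> z /=.
  move=> [_ -> [b b1 <-]]; rewrite opprD addNKr normrN normrZ gtr0_norm //.
  by rewrite -[leRHS]mulr1 ler_wpM2l // ltW.
move=> cz; exists c => //; exists (r^-1 *: (z - c)).
  rewrite /unit_ball /= normrZ gtr0_norm ?invr_gt0 // distrC.
  by rewrite ler_pdivrMl // mulr1.
by rewrite scalerA mulfV ?gt_eqF // scale1r addrC subrK.
Qed.

Lemma sub_enlarge A r : A `<=` enlarge A r.
Proof.
move=> z Az; exists z => //; exists 0; last by rewrite scaler0 addr0.
by rewrite /unit_ball /= normr0.
Qed.

Lemma rsup_le A B r : 0 <= r -> (forall a b, A a -> B b -> `|a - b| <= r) ->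
  rsup A B <= r.
Proof. by move=> r0 AB; apply: sup_le_ub => // _ [a Aa [b Bb <-]]; apply: AB. Qed.

Lemma rsup_ge {A B a b} : A `<=` S -> B `<=` S -> A a -> B b -> `|a - b| <= rsup A B.
Proof.
move=> AS BS Aa Bb; apply: sup_upper_bound; last by exists a => //; exists b.
split; first by exists `|a - b|, a => //; exists b.
by exists 2 => _ [a' /AS Sa' [b' /BS Sb' <-]]; apply: sphere_dist_le2.
Qed.

Lemma rsup_sphere_bound {A B} : A `<=` S -> B `<=` S -> 0 <= rsup A B <= 2.
Proof.
move=> AS BS; apply: sup_nonneg_le => // _ [a /AS Sa [b /BS Sb <-]].
by rewrite normr_ge0 sphere_dist_le2.
Qed.

Lemma hausdorff_ge0 A B : 0 <= hausdorff A B.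
Proof.
rewrite /hausdorff; set E := (X in inf X).
have [->|/set0P En] := eqVneq E set0; first by rewrite inf0.
by apply: lb_le_inf En _ => r [/ltW].
Qed.

Lemma hausdorff1_le {A c r} : 0 < r -> A c -> (forall a, A a -> `|c - a| <= r) ->
  hausdorff A [set c] <= r.
Proof.
move=> r0 Ac Ar; apply: ge_inf; first by exists 0 => r' [/ltW].
split=> //; split; last by move=> _ ->; apply: sub_enlarge.
by rewrite enlarge1E //; apply: Ar.
Qed.

Lemma hausdorff1_lt {A c M e} : 0 < M -> A c -> (forall a, A a -> `|c - a| <= M) ->
  hausdorff A [set c] < e -> forall a, A a -> `|c - a| < e.
Proof.
move=> M0 Ac AM He a Aa.
have [|r [r0 [Ar _]] re] := inf_lt _ He.
  exists M; split=> //; split; last by move=> _ ->; apply: sub_enlarge.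
  by rewrite enlarge1E //; apply: AM.
by move: (Ar a Aa); rewrite enlarge1E // => /le_lt_trans; apply.
Qed.

Definition UR_modulus : Prop := forall e, 0 < e -> exists2 d, 0 < d &
  forall u y, `|u| = 1 -> `|y| = 1 -> 2 - d <= `|u + y| -> `|u - y| <= e.

Lemma UR_modulus_of_UR : @UR R X -> UR_modulus.
Proof.
move=> URX e e0; apply: contrapT => not_modulus.
have /choice[f Hf] : forall n : nat, exists uy : X * X, [/\ `|uy.1| = 1, `|uy.2| = 1,
    2 - n.+1%:R^-1 <= `|uy.1 + uy.2| & e < `|uy.1 - uy.2|].
  move=> n; apply: contrapT => Hn; apply: not_modulus.
  exists n.+1%:R^-1; first by rewrite invr_gt0.
  move=> u y u1 y1 uy; rewrite leNgt; apply/negP => lt_uy.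
  by apply: Hn; exists (u, y).
have mid_cvg1 : (fun n => `|2^-1 *: ((f n).1 + (f n).2)|) @ \oo --> (1 : R).
  apply/cvgrPdist_le => eps eps0.
  have [N _ HN] := near_infty_natSinv_lt (PosNum eps0).
  exists N => // n /HN /= dn_lt; have [u1 y1 uy _] := Hf n.
  have uy2 : `|(f n).1 + (f n).2| <= 2 by apply: le_trans (ler_normD _ _) _; rewrite u1 y1.
  rewrite normrZ ger0_norm ?invr_ge0 //.
  move: uy uy2 dn_lt; set q := `|_ + _|; set dn := _^-1 => uy uy2 dn_lt.
  rewrite ler_norml; apply/andP; split; lra.
have u1 n : `|(f n).1| = 1 by case: (Hf n).
have y1 n : `|(f n).2| = 1 by case: (Hf n).
have /cvgrPdist_lt /(_ e e0) [N _ HN] := URX _ _ u1 y1 mid_cvg1.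
have [_ _ _ e_lt] := Hf N; move: (HN N (leqnn N)) => /=.
by rewrite sub0r normrN normr_id => /(lt_trans e_lt); rewrite ltxx.
Qed.

Lemma UR_of_UR_modulus : UR_modulus -> @UR R X.
Proof.
move=> modulus u y u1 y1 mid_cvg1; apply/cvgr0Pnorm_le => e e0.
have [d d0 Hd] := modulus e e0.
have [N _ HN] := (cvgrPdist_lt _ _).1 mid_cvg1 (d / 2) (divr_gt0 d0 (ltr0Sn _ 1)).
exists N => // n /HN /=; rewrite normr_id normrZ ger0_norm ?invr_ge0 //.
rewrite ltr_norml => /andP[_]; set q := `|u n + y n| => mid_lt.
by apply: Hd => //; rewrite -/q; lra.
Qed.

Definition near_dir (d e : R) : Prop :=
  forall x, X1 x -> forall a, Papprox S x d a -> `|dir x - a| <= e.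

Definition unif_near_dir : Prop := forall e, 0 < e -> exists2 d, 0 < d & near_dir d e.

Lemma near_dir_le {d d' e} : d' <= d -> near_dir d e -> near_dir d' e.
Proof. by move=> d'd near x Xx a /(Papprox_le d'd); apply: near. Qed.

Lemma unif_near_dir_of_UR_modulus : UR_modulus -> unif_near_dir.
Proof.
move=> modulus e e0; have [d d0 Hd] := modulus e e0.
exists d => // x Xx a Pa; have [a1 _] := (Papprox_sphereE Xx).1 Pa.
by apply: Hd => //; [apply: dir_sphere | apply: Papprox_norm_dirD].
Qed.

Lemma UR_modulus_of_unif_near_dir : unif_near_dir -> UR_modulus.
Proof.
move=> near e e0; have [d d0 Hd] := near (e / 2) (divr_gt0 e0 (ltr0Sn _ 1)).
have half_lt1 : 2^-1 < 1 :> R by rewrite invf_lt1 // ltr1n.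
exists (Num.min d 2^-1); first by rewrite lt_min d0 invr_gt0 ltr0n.
move=> u y u1 y1 uy.
have md : Num.min d 2^-1 <= d by rewrite ge_min lexx.
have mh : Num.min d 2^-1 <= 2^-1 by rewrite ge_min lexx orbT.
move: uy md mh; set m := Num.min _ _ => uy md mh.
have uy1 : 1 < `|u + y| by lra.
have uyd : 2 - d <= `|u + y| by lra.
have [Pu Py] := Papprox_sum_sphere d u1 y1 uy1 uyd.
have Xuy : X1 (u + y) by apply/X1E.
apply: le_trans (ler_distD (dir (u + y)) u y) _.
by rewrite distrC (splitr e) lerD // ?Hd.
Qed.

Lemma UR_unif_near_dir : @UR R X <-> unif_near_dir.
Proof.
split=> [/UR_modulus_of_UR/unif_near_dir_of_UR_modulus //|].
by move=> /UR_modulus_of_unif_near_dir/UR_of_UR_modulus.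
Qed.

Lemma unif_near_dir_Pmetric : unif_near_dir -> forall x, X1 x -> Pmetric S x = [set dir x].
Proof.
move=> near x Xx; apply/seteqP; split=> [a Pa|_ ->]; last exact: dir_Papprox.
apply/eqP; rewrite /= eq_sym -subr_eq0 -normr_le0; apply/ler_addgt0Pr => e e0.
have [d d0 Hd] := near e e0; rewrite add0r.
by apply: near_dir_le (ltW d0) Hd x Xx a Pa.
Qed.

Lemma unif_near_dir_chebyshevP : unif_near_dir <-> unif_strongly_chebyshev S X1.
Proof.
split=> [near|[single approx] e e0].
  split=> [x Xx|e e0]; first by exists (dir x); apply: unif_near_dir_Pmetric.
  have [d d0 Hd] := near e e0; exists d => // x Xx a Pa.
  by rewrite unif_near_dir_Pmetric // enlarge1E //; apply: Hd.
have [d d0 Hd] := approx e e0; exists d => // x Xx a Pa.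
have [c Pc] := single x Xx; have := Hd x Xx a Pa.
have : Pmetric S x (dir x) by apply: dir_Papprox.
by rewrite Pc => /= <-; rewrite enlarge1E.
Qed.

Lemma unif_near_dir_sup_cvg0P {E : R -> set R} {M : R} : 0 <= M ->
  (forall d z, 0 < d -> E d z -> 0 <= z <= M) ->
  (forall d e, 0 < d -> 0 < e -> near_dir d e -> forall z, E d z -> z <= 2 * e) ->
  (forall d e, 0 < d -> 0 < e -> (forall z, E d z -> z < e) -> near_dir d e) ->
  unif_near_dir <-> (fun n => sup (E n.+1%:R^-1)) @ \oo --> 0.
Proof.
move=> M0 EM near_small small_near.
have dn_gt0 n : 0 < n.+1%:R^-1 :> R by rewrite invr_gt0.
rewrite (@sup_cvg0P _ (fun n => E n.+1%:R^-1) M M0 (fun n z => EM _ z (dn_gt0 n))).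
split=> [near e e0|small e e0].
  have e4 : 0 < e / 4 by rewrite divr_gt0.
  have [d d0 Hd] := near _ e4; have [N _ HN] := near_infty_natSinv_lt (PosNum d0).
  exists N => n /HN /= /ltW dn_le z Ez.
  have := near_small _ _ (dn_gt0 n) e4 (near_dir_le dn_le Hd) z Ez; lra.
have [N HN] := small e e0; exists N.+1%:R^-1 => //.
exact: small_near (HN N (leqnn N)).
Qed.

Lemma rsup_Papprox_near {x x' d e} : X1 x -> X1 x' -> 0 <= d -> 0 <= e -> near_dir d e ->
  `|rsup (Papprox S x d) (Papprox S x' d) - `|dir x - dir x'| | <= 2 * e.
Proof.
move=> Xx Xx' d0 e0 near.
have lower : `|dir x - dir x'| <= rsup (Papprox S x d) (Papprox S x' d).
  exact: rsup_ge (Papprox_sub_sphere _ _) (Papprox_sub_sphere _ _)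
    (dir_Papprox Xx d0) (dir_Papprox Xx' d0).
have upper : rsup (Papprox S x d) (Papprox S x' d) <= `|dir x - dir x'| + 2 * e.
  apply: rsup_le => [|a b Pa Pb]; first by rewrite addr_ge0 ?mulr_ge0.
  have := near x Xx a Pa; have := near x' Xx' b Pb.
  have := ler_distD (dir x) a b; have := ler_distD (dir x') (dir x) b.
  rewrite (distrC a (dir x)); lra.
rewrite ger0_norm ?subr_ge0 //; lra.
Qed.

Lemma diam_Papprox_near {x d e} : X1 x -> 0 <= d -> 0 <= e -> near_dir d e ->
  diam (Papprox S x d) <= 2 * e.
Proof.
move=> Xx d0 e0 near; have := rsup_Papprox_near Xx Xx d0 e0 near.
by rewrite subrr normr0 subr0; apply: le_trans (ler_norm _).
Qed.

Lemma near_dir_of_diam d e : 0 <= d ->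
  (forall x, X1 x -> diam (Papprox S x d) < e) -> near_dir d e.
Proof.
move=> d0 small x Xx a Pa; apply/ltW/(le_lt_trans _ (small x Xx)).
exact: rsup_ge (Papprox_sub_sphere _ _) (Papprox_sub_sphere _ _) (dir_Papprox Xx d0) Pa.
Qed.

Lemma hausdorff_Papprox_bound x d : X1 x -> 0 <= d ->
  0 <= hausdorff (Papprox S x d) [set dir x] <= 2.
Proof.
move=> Xx d0; rewrite hausdorff_ge0 /=.
apply: hausdorff1_le => // [|a [Sa _]]; first exact: dir_Papprox.
exact: sphere_dist_le2 (dir_sphere Xx) Sa.
Qed.

Lemma near_dir_of_hausdorff d e : 0 <= d ->
  (forall x, X1 x -> hausdorff (Papprox S x d) [set dir x] < e) -> near_dir d e.
Proof.
move=> d0 small x Xx a Pa.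
apply/ltW/(hausdorff1_lt (M := 2) _ _ _ (small x Xx)) => //; first exact: dir_Papprox.
by move=> b [Sb _]; apply: sphere_dist_le2 (dir_sphere Xx) Sb.
Qed.

Lemma unif_near_dir_diamP : unif_near_dir <->
  (fun n => sup [set diam (Papprox S x n.+1%:R^-1) | x in X1]) @ \oo --> 0.
Proof.
apply: (unif_near_dir_sup_cvg0P (E := fun d => [set diam (Papprox S x d) | x in X1]) (M := 2)).
- by [].
- by move=> d _ d0 [x _ <-]; apply: rsup_sphere_bound; apply: Papprox_sub_sphere.
- by move=> d e d0 e0 near _ [x Xx <-]; apply: diam_Papprox_near (ltW d0) (ltW e0) near.
- by move=> d e d0 _ small; apply: near_dir_of_diam (ltW d0) _ => x Xx; apply: small; exists x.
Qed.

Lemma unif_near_dir_rsupP : unif_near_dir <->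
  (fun n => sup [set `|rsup (Papprox S x n.+1%:R^-1) (Papprox S x' n.+1%:R^-1)
                       - `|dir x - dir x'| | | x in X1 & x' in X1]) @ \oo --> 0.
Proof.
apply: (unif_near_dir_sup_cvg0P (M := 2)
  (E := fun d => [set `|rsup (Papprox S x d) (Papprox S x' d) - `|dir x - dir x'| |
                 | x in X1 & x' in X1])).
- by [].
- move=> d _ d0 [x Xx [x' Xx' <-]].
  have := rsup_sphere_bound (Papprox_sub_sphere x d) (Papprox_sub_sphere x' d).
  have := sphere_dist_le2 (dir_sphere Xx) (dir_sphere Xx').
  set r := rsup _ _; set c := `|_ - _| => c2 /andP[r0 r2].
  have c0 : 0 <= c := normr_ge0 _.
  by rewrite normr_ge0 /= ler_norml; apply/andP; split; lra.
- by move=> d e d0 e0 near _ [x Xx [x' Xx' <-]]; apply: rsup_Papprox_near; rewrite ?ltW.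
- move=> d e d0 _ small; apply: near_dir_of_diam (ltW d0) _ => x Xx.
  have := small _ (ex_intro2 _ _ x Xx (ex_intro2 _ _ x Xx erefl)).
  rewrite subrr normr0 subr0 ger0_norm //.
  by have /andP[] := rsup_sphere_bound (Papprox_sub_sphere x d) (Papprox_sub_sphere x d).
Qed.

Lemma unif_near_dir_hausdorffP : unif_near_dir <->
  (forall x, X1 x -> Pmetric S x = [set dir x]) /\
  (fun n => sup [set hausdorff (Papprox S x n.+1%:R^-1) (Pmetric S x) | x in X1])
    @ \oo --> 0.
Proof.
have hausdorffP (P1 : forall x, X1 x -> Pmetric S x = [set dir x]) : unif_near_dir <->
    (fun n => sup [set hausdorff (Papprox S x n.+1%:R^-1) (Pmetric S x) | x in X1])
      @ \oo --> 0.
  apply: (unif_near_dir_sup_cvg0P (M := 2)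
    (E := fun d => [set hausdorff (Papprox S x d) (Pmetric S x) | x in X1])).
  - by [].
  - by move=> d _ d0 [x Xx <-]; rewrite P1 //; apply: hausdorff_Papprox_bound (ltW d0).
  - move=> d e d0 e0 near _ [x Xx <-]; rewrite P1 //.
    have := hausdorff1_le e0 (dir_Papprox Xx (ltW d0)) (near x Xx); lra.
  - move=> d e d0 _ small; apply: near_dir_of_hausdorff (ltW d0) _ => x Xx.
    by rewrite -P1 //; apply: small; exists x.
split=> [near|[P1 /(hausdorffP P1)] //].
have P1 := unif_near_dir_Pmetric near; split=> //; exact/(hausdorffP P1).
Qed.

End UnitSphere.

Theorem corollary3p10 (R : realType) (X : completeNormedModType R) :
  let S := @unit_sphere R X in
  let X_1 := @X1 R X in
  let d (n : nat) : R := (n.+1%:R)^-1 in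
  [/\ (@UR R X <-> (fun n => sup [set Num.norm (rsup (Papprox S x (d n)) (Papprox S x' (d n))
                                      - Num.norm ((Num.norm x)^-1 *: x - (Num.norm x')^-1 *: x'))
                                    | x in X_1 & x' in X_1]) @ \oo --> (0 : R)),
      (@UR R X <-> (fun n => sup [set diam (Papprox S x (d n)) | x in X_1])
                     @ \oo --> (0 : R)),
      (@UR R X <-> ((forall x, X_1 x -> Pmetric S x = [set `|x|^-1 *: x]) /\
                    (fun n => sup [set hausdorff (Papprox S x (d n)) (Pmetric S x)
                                  | x in X_1]) @ \oo --> (0 : R)))
    & (@UR R X <-> unif_strongly_chebyshev S X_1)].
Proof.
move=> S X_1 d; have URP := @UR_unif_near_dir R X.
split.
- exact: iff_trans URP (@unif_near_dir_rsupP R X).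
- exact: iff_trans URP (@unif_near_dir_diamP R X).
- exact: iff_trans URP (@unif_near_dir_hausdorffP R X).
- exact: iff_trans URP (@unif_near_dir_chebyshevP R X).
Qed.
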